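(* Let $E$ be a Banach lattice with an order continuous norm, let $\mathfrak{B}$ be a Boolean subalgebra of $\mathfrak{B}(E)$ and let $\xi$ be a forward filtration in $\mathfrak{B}$. (i) If $T,S\colon E\to E$ are commuting $\mathfrak{B}$-Volterra operators then $\hat{T}_\xi$ and $\hat{S}_\xi$ commute on $\mathcal{M}_0(\xi)$. (ii) If $T$ is $\mathfrak{B}$-Volterra and $S=\pi T$ for some $\pi\in\mathfrak{B}$, then $\hat{S}_\xi=\pi\cdot\hat{T}_\xi$. (iii) If $T$ is $\mathfrak{B}$-Volterra and $S=\pi+T-\pi T$ for some $\pi\in\mathfrak{B}$, then $\hat{S}_\xi=\hat{\pi}_\xi+\hat{T}_\xi-\pi\cdot\hat{T}_\xi$.
   Context: $\mathfrak{B}(E)$ is the Boolean algebra of all order projections on $E$ ($\pi\le\rho$ iff $\pi\rho=\pi$, zero $\mathbf 0$, unit $\mathbf 1=I_E$). A positive operator $T$ is $\mathfrak{B}$-Volterra if for all $\pi\in\mathfrak{B}$, $x,y\in E$, $\pi x=\pi y$ implies $\pi Tx=\pi Ty$. A forward filtration in $\mathfrak{B}$ is a map $\xi\colon\{0,1,\dots,\infty\}\to\mathfrak{B}$ with $\xi_n\le\xi_{n+1}$, $\xi_0=\mathbf 0$, $\xi_\infty=\mathbf 1$. $\mathcal{M}_0(\xi)$ is the set of sequences $(x_n)_{n\ge1}$ in $E$ with $\xi_nx_m=x_n$ whenever $m\ge n\ge1$. For a positive operator $R$ on $E$ (in particular $R=\pi\in\mathfrak{B}$), $\hat{R}_\xi((x_n)_{n\ge1})=(\xi_nRx_n)_{n\ge1}$,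 and $\pi\cdot(x_n)_{n\ge1}=(\pi x_n)_{n\ge1}$. *)

From HB Require Import structures.
From mathcomp Require Import all_boot all_order all_algebra.
From mathcomp Require Import all_classical all_reals.
From mathcomp Require Import topology normedtype.
Set Implicit Arguments. Unset Strict Implicit. Unset Printing Implicit Defensive.
Import Order.TTheory GRing.Theory Num.Theory.
Import numFieldNormedType.Exports.
Local Open Scope classical_set_scope.
Local Open Scope ring_scope.

Section Defs.
Variables (R : realType) (E : normedModType R) (le : E -> E -> Prop).

Definition is_sup2 (x y z : E) : Prop :=
  le x z /\ le y z /\ (forall w, le x w -> le y w -> le z w).

(* E, ordered by le, is a (normed) vector lattice with a lattice norm.
   Completeness comes from E being a completeNormedModType in the theorem. *)
Record normed_vector_lattice : Prop := {
  nvl_refl : forall x, le x x;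
  nvl_antisym : forall x y, le x y -> le y x -> x = y;
  nvl_trans : forall x y z, le x y -> le y z -> le x z;
  nvl_add : forall x y z, le x y -> le (x + z) (y + z);
  nvl_scale : forall (a : R) x y, 0 <= a -> le x y -> le (a *: x) (a *: y);
  nvl_sup : forall x y, exists z, is_sup2 x y z;
  (* lattice norm: |x| <= |y| implies ||x|| <= ||y||, with |x| = sup(x,-x) *)
  nvl_norm : forall x y ax ay, is_sup2 x (- x) ax -> is_sup2 y (- y) ay ->
               le ax ay -> `|x| <= `|y| }.

Definition is_inf (D : set E) (z : E) : Prop :=
  (forall x, D x -> le z x) /\ (forall w, (forall x, D x -> le w x) -> le w z).

(* order continuous norm: every downward directed set (= net indexed by
   itself) x_a decreasing to 0 has ||x_a|| -> 0 *)
Definition order_continuous_norm : Prop :=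
  forall D : set E, D !=set0 ->
    (forall x y, D x -> D y -> exists z, [/\ D z, le z x & le z y]) ->
    is_inf D 0 ->
    forall e : R, 0 < e -> exists x, D x /\ `|x| < e.

Definition linear_op (T : E -> E) : Prop :=
  forall (a : R) x y, T (a *: x + y) = a *: T x + T y.

Definition positive_op (T : E -> E) : Prop :=
  linear_op T /\ forall x, le 0 x -> le 0 (T x).

Definition order_projection (P : E -> E) : Prop :=
  [/\ linear_op P, (forall x, P (P x) = P x) &
      (forall x, le 0 x -> le 0 (P x) /\ le (P x) x)].

(* Boolean subalgebra of the Boolean algebra B(E) of all order projections:
   zero 0, unit I, meet = composition, complement = I - pi *)
Definition boolean_subalgebra (B : set (E -> E)) : Prop :=
  [/\ (forall pi, B pi -> order_projection pi),
      B (fun _ => 0), B id,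
      (forall pi rho, B pi -> B rho -> B (pi \o rho)) &
      (forall pi, B pi -> B (fun x => x - pi x))].

Definition proj_le (pi rho : E -> E) : Prop := forall x, pi (rho x) = pi x.

(* forward filtration: xi_n for n : nat; xi_oo = I is implicit *)
Definition forward_filtration (B : set (E -> E)) (xi : nat -> E -> E) : Prop :=
  [/\ (forall n, B (xi n)), (forall n, proj_le (xi n) (xi n.+1)) &
      (forall x, xi 0%N x = 0)].

Definition volterra (B : set (E -> E)) (T : E -> E) : Prop :=
  positive_op T /\
  forall pi, B pi -> forall x y, pi x = pi y -> pi (T x) = pi (T y).

(* sequences (x_n)_{n>=1} are functions nat -> E; index 0 is ignored *)
Definition M0 (xi : nat -> E -> E) (x : nat -> E) : Prop :=
  forall n m, (1 <= n)%N -> (n <= m)%N -> xi n (x m) = x n.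

Definition hat (xi : nat -> E -> E) (T : E -> E) (x : nat -> E) : nat -> E :=
  fun n => xi n (T (x n)).

End Defs.

From HB Require Import structures.
From mathcomp Require Import all_boot all_order all_algebra.
From mathcomp Require Import all_classical all_reals.
From mathcomp Require Import topology normedtype.
Import Order.TTheory GRing.Theory Num.Theory.
Import numFieldNormedType.Exports.
Set Implicit Arguments. Unset Strict Implicit.
Local Open Scope classical_set_scope.
Local Open Scope ring_scope.

(* All three identities hold coordinatewise, for each n separately.  Since
   xi_n lies in B, the Volterra property applied to xi_n x = xi_n (xi_n x)
   gives xi_n T xi_n = xi_n T, so hat(T) hat(S) = hat(T S); and any two
   projections of a Boolean algebra commute, so xi_n pi = pi xi_n.  None of
   the lattice structure, order continuity or membership in M0(xi) is
   needed. *)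

Section LinearOps.
Variables (R : realType) (E : normedModType R).
Implicit Types (P Q T : E -> E).

Lemma linear_op0 T : linear_op T -> T 0 = 0.
Proof.
move=> linT; have := linT 1 0 0; rewrite !scale1r addr0 => T0D.
by apply: (addrI (T 0)); rewrite addr0 -T0D.
Qed.

Lemma linear_opD T : linear_op T -> forall x y, T (x + y) = T x + T y.
Proof. by move=> linT x y; have := linT 1 x y; rewrite !scale1r. Qed.

Lemma linear_opN T : linear_op T -> forall x, T (- x) = - T x.
Proof.
move=> linT x; rewrite -[- x]addr0 -scaleN1r linT linear_op0 //.
by rewrite addr0 scaleN1r.
Qed.

Lemma linear_opB T : linear_op T -> forall x y, T (x - y) = T x - T y.
Proof. by move=> linT x y; rewrite linear_opD // linear_opN. Qed.

Lemma idem_compl_comp_fix P Q : linear_op P -> linear_op Q ->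
  (forall x, Q (Q x) = Q x) ->
  (forall x, P (Q (P (Q x))) = P (Q x)) ->
  (forall x, let y := Q x - P (Q x) in Q y - P (Q y) = y) ->
  forall x, Q (P (Q x)) = P (Q x).
Proof.
move=> linP linQ idQ idPQ idCQ x; have := idCQ x.
rewrite /= !(linear_opB linQ, linear_opB linP) idQ idPQ subrr subr0.
by move/addrI/oppr_inj.
Qed.

Lemma comp_idem_compl_fix P Q : linear_op P -> linear_op Q ->
  (forall x, Q (Q x) = Q x) ->
  (forall x, Q (P (Q (P x))) = Q (P x)) ->
  (forall x, let y := Q (x - P x) in Q (y - P y) = y) ->
  forall x, Q (P (Q x)) = Q (P x).
Proof.
move=> linP linQ idQ idQP idQC x; have := idQC x.
rewrite /= !(linear_opB linQ, linear_opB linP) !idQ idQP opprB addrA subrK.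
by move/addrI/oppr_inj.
Qed.

Lemma boolean_subalgebra_comm (le : E -> E -> Prop) B :
  boolean_subalgebra le B -> forall P Q, B P -> B Q ->
  forall x, P (Q x) = Q (P x).
Proof.
case=> proj _ _ BM BC P Q BP BQ x.
have [linP _ _] := proj _ BP.
have [linQ idQ _] := proj _ BQ.
have idem S : B S -> forall y, S (S y) = S y by move/proj => [].
have QPQ_PQ := idem_compl_comp_fix linP linQ idQ (idem _ (BM _ _ BP BQ))
  (idem _ (BM _ _ (BC _ BP) BQ)).
have QPQ_QP := comp_idem_compl_fix linP linQ idQ (idem _ (BM _ _ BQ BP))
  (idem _ (BM _ _ BQ (BC _ BP))).
by rewrite -QPQ_PQ QPQ_QP.
Qed.

End LinearOps.

Section Hat.
Variables (R : realType) (E : normedModType R) (le : E -> E -> Prop).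
Variables (B : set (E -> E)) (xi : nat -> E -> E).
Hypotheses (BB : boolean_subalgebra le B) (Bxi : forall n, B (xi n)).

Lemma volterra_proj_idem T pi : volterra le B T -> B pi ->
  forall y, pi (T (pi y)) = pi (T y).
Proof.
case: BB => proj _ _ _ _ [_ VT] Bpi y.
by apply: VT => //; case: (proj _ Bpi).
Qed.

Lemma hat_comp T S x n : volterra le B T ->
  hat xi T (hat xi S x) n = hat xi (T \o S) x n.
Proof. by move=> VT; rewrite /hat volterra_proj_idem. Qed.

Lemma hat_proj_comp T pi x n : B pi ->
  hat xi (fun y => pi (T y)) x n = pi (hat xi T x n).
Proof. by move=> Bpi; rewrite /hat (boolean_subalgebra_comm BB). Qed.

Lemma linear_op_filtration n : linear_op (xi n).
Proof. by case: BB => proj _ _ _ _; case: (proj _ (Bxi n)). Qed.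

Lemma hatD S T x n :
  hat xi (fun y => S y + T y) x n = hat xi S x n + hat xi T x n.
Proof. exact: linear_opD (linear_op_filtration n) _ _. Qed.

Lemma hatB S T x n :
  hat xi (fun y => S y - T y) x n = hat xi S x n - hat xi T x n.
Proof. exact: linear_opB (linear_op_filtration n) _ _. Qed.

End Hat.

Theorem corollary4p4 (R : realType) (E : completeNormedModType R)
  (le : E -> E -> Prop) (B : set (E -> E)) (xi : nat -> E -> E) :
  normed_vector_lattice le ->
  order_continuous_norm le ->
  boolean_subalgebra le B ->
  forward_filtration B xi ->
  [/\ (forall T S : E -> E, volterra le B T -> volterra le B S ->
         (forall y, T (S y) = S (T y)) ->
         forall x, M0 xi x -> forall n, (1 <= n)%N ->
           hat xi T (hat xi S x) n = hat xi S (hat xi T x) n),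
      (forall (T pi : E -> E), volterra le B T -> B pi ->
         forall x, M0 xi x -> forall n, (1 <= n)%N ->
           hat xi (fun y => pi (T y)) x n = pi (hat xi T x n)) &
      (forall (T pi : E -> E), volterra le B T -> B pi ->
         forall x, M0 xi x -> forall n, (1 <= n)%N ->
           hat xi (fun y => pi y + T y - pi (T y)) x n =
           hat xi pi x n + hat xi T x n - pi (hat xi T x n))].
Proof.
move=> _ _ BB [Bxi _ _]; split.
- move=> T S VT VS TS x _ n _.
  by rewrite !(hat_comp BB Bxi) //; congr (xi n _); apply: TS.
- by move=> T pi _ Bpi x _ n _; apply: (hat_proj_comp BB).
- move=> T pi _ Bpi x _ n _.
  rewrite (hatB BB Bxi (fun y => pi y + T y)) (hatD BB Bxi).
  by rewrite (hat_proj_comp BB Bxi T).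
Qed.
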